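(* Let $G=(V,E)$ be a strongly connected weighted directed graph and $\delta\in[0,1]$. For any $T\subseteq S\subseteq V$, $$\mathsf{fp}_{r=1}^\delta(G,S)=\mathsf{fp}_{r=1}^\delta(G,T)+\mathsf{fp}_{r=1}^\delta(G,S\setminus T).$$
   Context: Mixed $\delta$-updating on a weighted directed graph with weights $w_{uv}\ge0$ ($u\to v$ is an edge iff $w_{uv}>0$): each vertex holds a mutant (fitness $r$) or wild-type (fitness $1$); $f_S(u)$ is the fitness at $u$ when $S$ is the mutant set. At each step, with probability $\delta$ a death-Birth step: choose $v$ uniformly to die, choose $u$ with probability proportional to $f_S(u)w_{uv}$, $u$ copies its type onto $v$; with probability $1-\delta$ a Birth-death step: choose $u$ with probability proportional to $f_S(u)$, choose $v$ with probability proportional to $w_{uv}$, $u$ copies its type onto $v$. $\mathsf{fp}_r^\delta(G,S_0)$ is the probability all vertices eventually become mutant from initial mutant set $S_0$. *)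

From HB Require Import structures.
From mathcomp Require Import all_boot all_order all_algebra.
From mathcomp Require Import all_classical all_reals all_analysis.
Set Implicit Arguments. Unset Strict Implicit. Unset Printing Implicit Defensive.
Import Order.TTheory GRing.Theory Num.Theory numFieldNormedType.Exports.
Local Open Scope ring_scope.

Section Moran.
Variables (R : realType) (V : finType) (w : V -> V -> R).

Definition fitness (r : R) (S : {set V}) (u : V) : R := if u \in S then r else 1.

(* probability that, in one step of mixed delta-updating from mutant set S,
   vertex u reproduces onto vertex v *)
Definition pair_prob (r delta : R) (S : {set V}) (u v : V) : R :=
  delta * (#|V|%:R)^-1 * (fitness r S u * w u v / \sum_(x : V) fitness r S x * w x v)
  + (1 - delta) * (fitness r S u / \sum_(x : V) fitness r S x)
                * (w u v / \sum_(y : V) w u y).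

Definition after (S : {set V}) (u v : V) : {set V} :=
  if u \in S then v |: S else S :\ v.

Definition trans (r delta : R) (S S' : {set V}) : R :=
  \sum_(u : V) \sum_(v : V) pair_prob r delta S u v * (after S u v == S')%:R.

Fixpoint allmut_at (r delta : R) (n : nat) (S : {set V}) : R :=
  match n with
  | 0 => (S == [set: V])%:R
  | n'.+1 => \sum_(S' : {set V}) trans r delta S S' * allmut_at r delta n' S'
  end.

(* fixation probability fp_r^delta(G, S0): probability that all vertices
   eventually become mutant (setT is absorbing, so this is the limit of the
   probability of being at setT at time n) *)
Definition fp (r delta : R) (S0 : {set V}) : R :=
  limn (fun n => allmut_at r delta n S0).

End Moran.

Definition strongly_connected (R : realType) (V : finType) (w : V -> V -> R) :=
  forall u v : V, connect (fun x y => 0 < w x y) u v.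

From mathcomp Require Import all_boot all_order all_algebra.
From mathcomp Require Import boolp functions filter reals topology normedtype sequences.
From mathcomp Require Import ring lra.
Import Order.TTheory GRing.Theory Num.Theory numFieldNormedType.Exports.
Set Implicit Arguments. Unset Strict Implicit. Unset Printing Implicit Defensive.
Local Open Scope classical_set_scope.
Local Open Scope ring_scope.

(* At r = 1 the pair probabilities do not depend on the mutant set, so the
   chains started from disjoint A, B and from A :|: B can be driven by the same
   pairs (u, v), and the third chain stays the union of the other two. The
   fixation indicator is additive on such a pair up to a defect lying in
   [0, transient A]. By strong connectivity every nonempty set fixates within
   #|V| steps with probability bounded away from 0, so the transient mass decays
   geometrically and the defect vanishes in the limit. *)

Lemma sumr_gt0 (R : numDomainType) (I : finType) (F : I -> R) (j : I) :
  (forall i, 0 <= F i) -> 0 < F j -> 0 < \sum_i F i.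
Proof. by move=> F_ge0 Fj_gt0; rewrite (bigD1 j) //= ltr_pwDl ?sumr_ge0. Qed.

Section TransitionOperator.
Variables (R : numDomainType) (V : finType) (P : V -> V -> R).
Variables (X : Type) (step : X -> V -> V -> X).

(* [transn n f x] is the expectation of [f] after [n] steps of the chain that
   moves from [x] to [step x u v] with weight [P u v]. *)
Fixpoint transn (n : nat) (f : X -> R) (x : X) : R :=
  if n is n'.+1 then \sum_u \sum_v P u v * transn n' f (step x u v) else f x.

Lemma transnD m n f x : transn (m + n) f x = transn m (transn n f) x.
Proof.
elim: m x => //= m IH x.
by apply: eq_bigr => u _; apply: eq_bigr => v _; rewrite IH.
Qed.

Lemma transnB n f g x :
  transn n (fun y => f y - g y) x = transn n f x - transn n g x.
Proof.
elim: n x => //= n IH x; rewrite -sumrB; apply: eq_bigr => u _.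
by rewrite -sumrB; apply: eq_bigr => v _; rewrite IH mulrBr.
Qed.

Lemma transnZ n a f x : transn n (fun y => a * f y) x = a * transn n f x.
Proof.
elim: n x => //= n IH x; rewrite mulr_sumr; apply: eq_bigr => u _.
by rewrite mulr_sumr; apply: eq_bigr => v _; rewrite IH mulrCA.
Qed.

Hypothesis P_ge0 : forall u v, 0 <= P u v.

Lemma transn_ge0 n f x : (forall y, 0 <= f y) -> 0 <= transn n f x.
Proof.
move=> f_ge0; elim: n x => //= n IH x.
by apply: sumr_ge0 => u _; apply: sumr_ge0 => v _; rewrite mulr_ge0.
Qed.

Lemma transn_le n f g x : (forall y, f y <= g y) -> transn n f x <= transn n g x.
Proof.
move=> fg; elim: n x => //= n IH x.
by apply: ler_sum => u _; apply: ler_sum => v _; apply/ler_wpM2l/IH.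
Qed.

Lemma transn_nondecreasing f x :
  (forall y, f y <= transn 1 f y) -> nondecreasing_seq (fun n => transn n f x).
Proof.
move=> f_le m n /subnK <-; elim: (n - m)%N => [|d IH]; first by rewrite add0n.
by apply: le_trans IH _; rewrite addSn -addn1 [leRHS]transnD; apply: transn_le.
Qed.

Lemma transn_nonincreasing f x :
  (forall y, transn 1 f y <= f y) -> nonincreasing_seq (fun n => transn n f x).
Proof.
move=> f_ge m n /subnK <-; elim: (n - m)%N => [|d IH]; first by rewrite add0n.
by apply: le_trans _ IH; rewrite addSn -addn1 [leLHS]transnD; apply: transn_le.
Qed.

Hypothesis P_sum1 : \sum_u \sum_v P u v = 1.

Lemma sum_transition_mul c : \sum_u \sum_v P u v * c = c.
Proof.
by rewrite -[RHS]mul1r -P_sum1 mulr_suml; apply: eq_bigr => u _; rewrite mulr_suml.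
Qed.

Lemma transn_cst n c x : transn n (fun=> c) x = c.
Proof.
elim: n x => //= n IH x.
by under eq_bigr do under eq_bigr do rewrite IH; apply: sum_transition_mul.
Qed.

Lemma transn_stationary n f x : (forall u v, step x u v = x) -> transn n f x = f x.
Proof.
move=> x_fixed; elim: n => //= n IH.
by under eq_bigr do under eq_bigr do rewrite x_fixed IH; apply: sum_transition_mul.
Qed.

End TransitionOperator.

Section After.
Variable V : finType.
Implicit Types (A B : {set V}) (u v : V).

Lemma after_setT u v : after [set: V] u v = [set: V].
Proof. by rewrite /after in_setT setUT. Qed.

Lemma after_set0 u v : after set0 u v = set0 :> {set V}.
Proof. by rewrite /after in_set0 set0D. Qed.

Lemma after_setU A B u v : after (A :|: B) u v = after A u v :|: after B u v.
Proof.
rewrite /after in_setU; apply/setP => x.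
by case: (u \in A); case: (u \in B); rewrite !inE; case: (x == v).
Qed.

Lemma after_setI_eq0 A B u v :
  A :&: B = set0 -> after A u v :&: after B u v = set0.
Proof.
move/setP => AB0; apply/setP => x; move: (AB0 u) (AB0 x); rewrite /after !inE.
by case: (u \in A); case: (u \in B); rewrite ?inE;
  case: (x == v); case: (x \in A); case: (x \in B).
Qed.

End After.

Section Indicators.
Variables (R : numDomainType) (V : finType).
Implicit Types (A B S : {set V}).

Definition fixated S : R := (S == [set: V])%:R.

Definition transient S : R := ((S != set0) && (S != [set: V]))%:R.

Lemma fixated_ge0 S : 0 <= fixated S.
Proof. exact: ler0n. Qed.

Lemma fixated_le1 S : fixated S <= 1.
Proof. by rewrite /fixated lern1 leq_b1. Qed.

Lemma transient_ge0 S : 0 <= transient S.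
Proof. exact: ler0n. Qed.

Lemma transient_le1 S : transient S <= 1.
Proof. by rewrite /transient lern1 leq_b1. Qed.

Lemma transient_le1_fixated S : transient S <= 1 - fixated S.
Proof.
by rewrite /transient /fixated; case: (S == _); case: (S == _); rewrite /= ?subrr ?subr0.
Qed.

Lemma fixated_setU_bounds A B : [set: V] != set0 -> A :&: B = set0 ->
  0 <= fixated (A :|: B) - fixated A - fixated B <= transient A.
Proof.
move=> setT_neq0 AB0; rewrite /fixated /transient.
have [AB_T|AB_nT] := eqVneq (A :|: B) [set: V]; last first.
  have [A_T|_] := eqVneq A [set: V]; first by rewrite A_T setTU eqxx in AB_nT.
  have [B_T|_] := eqVneq B [set: V]; first by rewrite B_T setUT eqxx in AB_nT.
  by rewrite /= mulr0n !subr0 lexx ler0n.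
have [A_T|A_nT] := eqVneq A [set: V].
  have -> : B = set0 by rewrite -AB0 A_T setTI.
  by rewrite eq_sym (negbTE setT_neq0) /= andbF subrr subr0 lexx.
have [A0|A_n0] := eqVneq A set0.
  by move: AB_T; rewrite A0 set0U => ->; rewrite !eqxx /= mulr0n mulr1n subr0 subrr lexx.
have [B_T|_] := eqVneq B [set: V].
  by rewrite -AB0 B_T setIT eqxx in A_n0.
by rewrite /= mulr0n !subr0 lexx ler01.
Qed.

End Indicators.

Arguments fixated {R V} S.
Arguments transient {R V} S.

Section Connect.
Variables (T : finType) (e : rel T).

Lemma connect_crossing (S : {set T}) a b : connect e a b -> a \in S -> b \notin S ->
  exists u v, [/\ u \in S, v \notin S & e u v].
Proof.
case/connectP => p + ->; elim: p a => [|x p IH] a /=; first by move=> _ ->.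
case/andP => eax ex_p aS; case xS: (x \in S); first exact: IH.
by exists a, x; rewrite xS.
Qed.

Lemma connect_edge_from a b u : e a b -> connect e u a -> exists v, e u v.
Proof.
move=> eab /connectP [[|y p] /=]; first by move=> _ <-; exists b.
by case/andP => euy _ _; exists y.
Qed.

Lemma connect_edge_to a b v : e a b -> connect e b v -> exists u, e u v.
Proof.
move=> eab /connectP [p]; case/lastP: p => [|p y] /=; first by move=> _ ->; exists a.
by rewrite rcons_path last_rcons => /andP [_ eyv] ->; exists (last b p).
Qed.

End Connect.

(* Without edges every denominator in [pair_prob] is 0, and [x / 0 = 0]. *)
Lemma fp_no_edge (R : realType) (V : finType) (w : V -> V -> R) r delta S :
  (forall u v, w u v = 0) -> fp w r delta S = 0.
Proof.
move=> w0; rewrite /fp; apply: cvg_lim => //; rewrite -cvg_shiftS /=.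
apply: cvg_near_cst; near=> n; apply: big1 => S' _; rewrite /trans big1 ?mul0r // => u _.
by apply: big1 => v _; rewrite /pair_prob !w0 !(mulr0, mul0r, addr0).
Unshelve. all: by end_near.
Qed.

Section NeutralDrift.
Variables (R : realType) (V : finType) (w : V -> V -> R) (delta : R).
Hypotheses (w_ge0 : forall u v, 0 <= w u v) (delta_ge0 : 0 <= delta) (delta_le1 : delta <= 1).

Lemma out_weight_gt0 a b :
  strongly_connected w -> 0 < w a b -> forall u, 0 < \sum_y w u y.
Proof.
move=> w_sc ab_gt0 u; have [v uv_gt0] := connect_edge_from ab_gt0 (w_sc u a).
exact: sumr_gt0 (w_ge0 u) uv_gt0.
Qed.

Lemma in_weight_gt0 a b :
  strongly_connected w -> 0 < w a b -> forall v, 0 < \sum_x w x v.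
Proof.
move=> w_sc ab_gt0 v; have [u uv_gt0] := connect_edge_to ab_gt0 (w_sc b v).
exact: sumr_gt0 (w_ge0^~ v) uv_gt0.
Qed.

Definition neutral_prob (u v : V) : R := pair_prob w 1 delta [set: V] u v.

Lemma fitness1 (S : {set V}) : fitness (1 : R) S = fun=> 1.
Proof. by apply: funext => u; rewrite /fitness if_same. Qed.

Lemma pair_prob_neutral S u v : pair_prob w 1 delta S u v = neutral_prob u v.
Proof. by rewrite /neutral_prob /pair_prob !fitness1. Qed.

Lemma neutral_probE u v : neutral_prob u v =
  (delta * (w u v / \sum_x w x v) + (1 - delta) * (w u v / \sum_y w u y)) / #|V|%:R.
Proof.
rewrite /neutral_prob /pair_prob fitness1 sumr_const !mul1r.
under eq_bigr do rewrite mul1r.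
ring.
Qed.

Lemma neutral_prob_ge0 u v : 0 <= neutral_prob u v.
Proof.
by rewrite neutral_probE divr_ge0 // addr_ge0 // mulr_ge0 ?subr_ge0 ?divr_ge0 ?sumr_ge0.
Qed.

Lemma neutral_prob_gt0 u v : 0 < w u v -> 0 < neutral_prob u v.
Proof.
move=> uv_gt0.
have V_gt0 : 0 < #|V|%:R :> R by rewrite ltr0n; apply/card_gt0P; exists u.
have in_gt0 : 0 < w u v / \sum_x w x v by rewrite divr_gt0 // (sumr_gt0 (w_ge0^~ v) uv_gt0).
have out_gt0 : 0 < w u v / \sum_y w u y by rewrite divr_gt0 // (sumr_gt0 (w_ge0 u) uv_gt0).
rewrite neutral_probE divr_gt0 //.
move: delta_ge0; rewrite le_eqVlt => /predU1P [<- | delta_gt0].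
  by rewrite mul0r add0r subr0 mul1r.
by apply: ltr_pwDl; [exact: mulr_gt0 | rewrite mulr_ge0 ?subr_ge0 // ltW].
Qed.

Lemma neutral_prob_sum1 : (0 < #|V|)%N ->
  (forall u, 0 < \sum_y w u y) -> (forall v, 0 < \sum_x w x v) ->
  \sum_u \sum_v neutral_prob u v = 1.
Proof.
move=> V_gt0 out_gt0 in_gt0.
have in1 v : \sum_u w u v / \sum_x w x v = 1 by rewrite -mulr_suml divff ?lt0r_neq0.
have out1 u : \sum_v w u v / \sum_y w u y = 1 by rewrite -mulr_suml divff ?lt0r_neq0.
under eq_bigr do under eq_bigr do rewrite neutral_probE.
under eq_bigr do rewrite -mulr_suml big_split /= -!mulr_sumr out1 mulr1.
rewrite -mulr_suml big_split /= -mulr_sumr exchange_big /=.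
under eq_bigr do rewrite in1.
rewrite !sumr_const -(mulr_natr (1 - delta)) -mulrDl addrC subrK mul1r.
by rewrite divff // pnatr_eq0 -lt0n; exact: V_gt0.
Qed.

Local Notation evolve := (transn neutral_prob (@after V)).

Lemma allmut_atE n S : allmut_at w 1 delta n S = evolve n fixated S.
Proof.
elim: n S => //= n IH S; rewrite /trans.
under eq_bigr do rewrite IH mulr_suml.
rewrite exchange_big; apply: eq_bigr => u _.
under eq_bigr do rewrite mulr_suml.
rewrite exchange_big; apply: eq_bigr => v _.
rewrite (bigD1 (after S u v)) //= eqxx mulr1 pair_prob_neutral big1 ?addr0 // => S'.
by rewrite eq_sym => /negbTE ->; rewrite mulr0 mul0r.
Qed.

Lemma evolve_ge0 n f S : (forall T, 0 <= f T) -> 0 <= evolve n f S.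
Proof. by move=> f_ge0; apply: transn_ge0 => //; exact: neutral_prob_ge0. Qed.

Lemma evolve_le n f g S : (forall T, f T <= g T) -> evolve n f S <= evolve n g S.
Proof. by move=> fg; apply: transn_le => //; exact: neutral_prob_ge0. Qed.

Section Fixation.
Hypotheses (w_sc : strongly_connected w) (neutral_sum1 : \sum_u \sum_v neutral_prob u v = 1).

Lemma setT_neq0 : [set: V] != set0.
Proof.
apply/negP => /eqP V0; move: neutral_sum1; rewrite big_pred0 => [/esym/eqP|u].
  by rewrite oner_eq0.
by rewrite -(in_setT u) V0 in_set0.
Qed.

Lemma evolve_fixated_gt0 k S : S != set0 -> (#|~: S| <= k)%N -> 0 < evolve k fixated S.
Proof.
elim: k S => [|k IH] S S_neq0 SC_le.
  move: SC_le; rewrite leqn0 cards_eq0 => /eqP SC0.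
  by rewrite /= /fixated -[S]setCK SC0 setC0 eqxx ltr01.
have [->|S_neqT] := eqVneq S [set: V].
  by rewrite transn_stationary /fixated ?eqxx ?ltr01 // => u v; rewrite after_setT.
have [a aS] := set0Pn _ S_neq0.
rewrite -properT in S_neqT; have [_ [b _ bS]] := properP S_neqT.
have [u [v [uS vS uv_gt0]]] := connect_crossing (w_sc a b) aS bS.
have card_lt : (#|~: (v |: S)| < #|~: S|)%N.
  by rewrite proper_card // properC properE subsetUr subUset sub1set (negbTE vS).
have term_ge0 u' v' : 0 <= neutral_prob u' v' * evolve k fixated (after S u' v').
  by rewrite mulr_ge0 ?neutral_prob_ge0 ?evolve_ge0 //; exact: fixated_ge0.
apply: (sumr_gt0 (j := u)) => [u'|]; first by apply: sumr_ge0 => v' _.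
apply: (sumr_gt0 (j := v)) => //; rewrite /after uS mulr_gt0 ?neutral_prob_gt0 // IH //.
- by apply/set0Pn; exists v; rewrite !inE eqxx.
- by rewrite -ltnS (leq_trans card_lt SC_le).
Qed.

Lemma evolve_fixated_lb : exists2 eta, 0 < eta &
  forall S, S != set0 -> eta <= evolve #|V| fixated S.
Proof.
have [S0 S0_neq0 S0_min] :=
  arg_minP (fun S => evolve #|V| fixated S) (setT_neq0 : predC1 set0 _).
exists (evolve #|V| fixated S0) => [|S S_neq0]; last exact: S0_min.
by apply: evolve_fixated_gt0 => //; rewrite -cardsT subset_leq_card ?subsetT.
Qed.

Lemma evolve_transient_geometric : exists2 q, 0 <= q < 1 &
  forall j S, evolve (#|V| * j) transient S <= q ^+ j.
Proof.
have [eta eta_gt0 eta_le] := evolve_fixated_lb.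
have eta_le1 : eta <= 1.
  have := eta_le _ setT_neq0.
  by rewrite transn_stationary /fixated ?eqxx // => u v; rewrite after_setT.
have decay S : evolve #|V| transient S <= (1 - eta) * transient S.
  have [->|S_neq0] := eqVneq S set0.
    by rewrite transn_stationary /transient ?eqxx ?mulr0 // => u v; rewrite after_set0.
  have [->|S_neqT] := eqVneq S [set: V].
    by rewrite transn_stationary /transient ?eqxx ?andbF ?mulr0 // => u v; rewrite after_setT.
  rewrite {2}/transient S_neq0 S_neqT mulr1.
  apply: le_trans (evolve_le _ _ (@transient_le1_fixated _ _)) _.
  by rewrite transnB transn_cst //; have := eta_le S S_neq0; lra.
exists (1 - eta); first by apply/andP; split; lra.
elim=> [|j IH] S; first by rewrite muln0 expr0; exact: transient_le1.
rewrite mulnS addnC transnD exprS.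
apply: le_trans (evolve_le _ _ decay) _.
by rewrite transnZ ler_wpM2l ?IH //; lra.
Qed.

Lemma evolve_transient_nonincreasing S :
  nonincreasing_seq (fun n => evolve n transient S).
Proof.
apply: transn_nonincreasing => [|T]; first exact: neutral_prob_ge0.
have [->|T_neq0] := eqVneq T set0.
  by rewrite transn_stationary // => u v; rewrite after_set0.
have [->|T_neqT] := eqVneq T [set: V].
  by rewrite transn_stationary // => u v; rewrite after_setT.
rewrite {2}/transient T_neq0 T_neqT -(transn_cst (@after V) neutral_sum1 1 1 T).
by apply: evolve_le; exact: transient_le1.
Qed.

Lemma evolve_transient_cvg0 S : evolve n transient S @[n --> \oo] --> 0.
Proof.
have [q /andP [q_ge0 q_lt1] geom] := evolve_transient_geometric.
have /cvgr0Pnorm_lt qj_cvg0 : q ^+ j @[j --> \oo] --> 0.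
  by apply: cvg_expr; rewrite ger0_norm.
apply/cvgr0Pnorm_lt => e e_gt0; have [j _ qj_lt] := qj_cvg0 e e_gt0.
near=> n; rewrite ger0_norm ?evolve_ge0 //.
have Kj_le_n : (#|V| * j <= n)%N by near: n; exact: nbhs_infty_ge.
apply: le_lt_trans (evolve_transient_nonincreasing S Kj_le_n) _.
apply: le_lt_trans (geom j S) _.
by apply: le_lt_trans (ler_norm _) _; apply: qj_lt => /=.
Unshelve. all: by end_near.
Qed.

Lemma evolve_fixated_cvg S : cvgn (fun n => evolve n fixated S).
Proof.
apply: nondecreasing_is_cvgn.
  apply: transn_nondecreasing => [|T]; first exact: neutral_prob_ge0.
  have [->|T_neqT] := eqVneq T [set: V].
    by rewrite transn_stationary // => u v; rewrite after_setT.
  by rewrite /fixated (negbTE T_neqT) evolve_ge0 //; exact: fixated_ge0.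
exists 1 => _ [n _ <-]; rewrite -(transn_cst (@after V) neutral_sum1 n 1 S) /=.
by apply: evolve_le; exact: fixated_le1.
Qed.

Lemma evolve_fixated_setU_bounds n A B : A :&: B = set0 ->
  0 <= evolve n fixated (A :|: B) - evolve n fixated A - evolve n fixated B
    <= evolve n transient A.
Proof.
elim: n A B => [|n IH] A B AB0 /=; first exact: fixated_setU_bounds setT_neq0 AB0.
have {}IH u v := IH _ _ (after_setI_eq0 u v AB0).
apply/andP; split; rewrite -!sumrB.
  apply: sumr_ge0 => u _; rewrite -!sumrB; apply: sumr_ge0 => v _.
  by rewrite -!mulrBr after_setU mulr_ge0 ?neutral_prob_ge0 //; case/andP: (IH u v).
apply: ler_sum => u _; rewrite -!sumrB; apply: ler_sum => v _.
by rewrite -!mulrBr after_setU ler_wpM2l ?neutral_prob_ge0 //; case/andP: (IH u v).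
Qed.

Lemma evolve_fixated_setU_defect A B : A :&: B = set0 ->
  evolve n fixated (A :|: B) - evolve n fixated A - evolve n fixated B
    @[n --> \oo] --> 0.
Proof.
move=> AB0; apply: (squeeze_cvgr _ (cvg_cst 0) (evolve_transient_cvg0 A)).
by near=> n; exact: evolve_fixated_setU_bounds.
Unshelve. all: by end_near.
Qed.

Lemma fp_neutral_setU A B : A :&: B = set0 ->
  fp w 1 delta (A :|: B) = fp w 1 delta A + fp w 1 delta B.
Proof.
move=> AB0.
have fpE S : fp w 1 delta S = limn (fun n => evolve n fixated S).
  by rewrite /fp; under eq_fun do rewrite allmut_atE.
rewrite !fpE; apply: cvg_lim => //.
have fixated_cvg S := evolve_fixated_cvg (S := S).
rewrite -[X in _ --> X]addr0; apply: (cvg_trans _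
  (cvgD (cvgD (fixated_cvg A) (fixated_cvg B)) (evolve_fixated_setU_defect AB0))).
by apply: near_eq_cvg; near=> n; rewrite !fctE; ring.
Unshelve. all: by end_near.
Qed.

End Fixation.
End NeutralDrift.

Theorem mainTheorem9 (R : realType) (V : finType) (w : V -> V -> R)
  (hw : forall u v : V, 0 <= w u v) (hsc : strongly_connected w)
  (delta : R) (hd0 : 0 <= delta) (hd1 : delta <= 1)
  (S T : {set V}) (hTS : T \subset S) :
  fp w 1 delta S = fp w 1 delta T + fp w 1 delta (S :\: T).
Proof.
have [[a [b ab_gt0]] | no_edge] := pselect (exists a b, 0 < w a b); last first.
  have w0 u v : w u v = 0.
    apply/eqP; rewrite eq_le hw andbT leNgt; apply/negP => uv_gt0.
    by apply: no_edge; exists u, v.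
  by rewrite !fp_no_edge // addr0.
have sum1 : \sum_u \sum_v neutral_prob w delta u v = 1.
  apply: neutral_prob_sum1 => //; first by apply/card_gt0P; exists a.
  - exact: (out_weight_gt0 hw hsc ab_gt0).
  - exact: (in_weight_gt0 hw hsc ab_gt0).
rewrite -{1}(setID S T) (setIidPr hTS) fp_neutral_setU //.
by rewrite setIDA setDIl setDv set0I.
Qed.
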